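(* Let $N\ge 4$ be even and let $P_1,\dots,P_N$ be an $N$-periodic billiard trajectory in $E$, with outer polygon $P_1',\dots,P_N'$. For $j=1,2$ let $P'^{-1}_{j,i}=f_j+\dfrac{P_i'-f_j}{|P_i'-f_j|^2}$ be the inversion of $P_i'$ in the unit circle centered at $f_j$, and let $A_j'^\dagger$ be the signed area of the polygon $P'^{-1}_{j,1},\dots,P'^{-1}_{j,N}$. Then $A_1'^\dagger=A_2'^\dagger$, i.e. $A_1'^\dagger/A_2'^\dagger=1$.
   Context: Let $E$ be the ellipse $x^2/a^2+y^2/b^2=1$ with $a>b>0$, center $O=(0,0)$ and foci $f_1=(-\sqrt{a^2-b^2},0)$, $f_2=(\sqrt{a^2-b^2},0)$. An $N$-periodic billiard trajectory is a convex polygon with vertices $P_1,\dots,P_N\in E$ (indices mod $N$), listed counterclockwise and winding once around $O$, with $P_i\neq P_{i+1}$, such that at every vertex $P_i$ the normal line to $E$ at $P_i$ bisects the angle $\angle P_{i-1}P_iP_{i+1}$, and all of whose sides are tangent to a common ellipse confocal with $E$. Its outer polygon has vertices $P_i'$ = intersection of the tangent lines to $E$ at $P_i$ and at $P_{i+1}$. The signed area of a polygon with vertices $W_i=(x_i,y_i)$, $i=1,\dots,N$ (indices mod $N$), is $S=\tfrac12\sum_{i=1}^N (x_iy_{i+1}-x_{i+1}y_i)$. *)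

From Stdlib Require Import Reals Lra.
Open Scope R_scope.

Definition pt := (R * R)%type.
Definition px (p : pt) : R := fst p.
Definition py (p : pt) : R := snd p.
Definition vsub (p q : pt) : pt := (px p - px q, py p - py q).
Definition vadd (p q : pt) : pt := (px p + px q, py p + py q).
Definition vscale (k : R) (p : pt) : pt := (k * px p, k * py p).
Definition dot (p q : pt) : R := px p * px q + py p * py q.
Definition cross (p q : pt) : R := px p * py q - py p * px q.
Definition norm2 (p : pt) : R := dot p p.
Definition vnorm (p : pt) : R := sqrt (norm2 p).
Definition unitv (p : pt) : pt := vscale (/ vnorm p) p.

Definition on_ellipse (a b : R) (p : pt) : Prop :=
  px p ^ 2 / a ^ 2 + py p ^ 2 / b ^ 2 = 1.

(* (half) gradient of the ellipse equation: a normal vector at p *)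
Definition ell_normal (a b : R) (p : pt) : pt := (px p / a ^ 2, py p / b ^ 2).

Definition on_tangent_line (a b : R) (p X : pt) : Prop :=
  dot (vsub X p) (ell_normal a b p) = 0.

Definition line_tangent_to_ellipse (al be : R) (p q : pt) : Prop :=
  exists T : pt, on_ellipse al be T /\ cross (vsub q p) (vsub T p) = 0 /\
    dot (vsub q p) (ell_normal al be T) = 0.

Definition foc1 (a b : R) : pt := (- sqrt (a ^ 2 - b ^ 2), 0).
Definition foc2 (a b : R) : pt := (sqrt (a ^ 2 - b ^ 2), 0).

Definition invert (f Q : pt) : pt := vadd f (vscale (/ norm2 (vsub Q f)) (vsub Q f)).

(* signed area of the polygon W 0, ..., W (N-1) (indices mod N,
   W is assumed N-periodic so W N = W 0) *)
Definition signed_area (N : nat) (W : nat -> pt) : R :=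
  / 2 * sum_f_R0 (fun i => px (W i) * py (W (S i)) - px (W (S i)) * py (W i)) (pred N).

Definition billiard_trajectory (a b : R) (N : nat) (P : nat -> pt) : Prop :=
  (forall i, P (i + N)%nat = P i) /\
  (forall i, on_ellipse a b (P i)) /\
  (forall i, P i <> P (S i)) /\
  (* convex, counterclockwise, winding once around O: the vertices occur on E
     in strictly increasing eccentric-angle order, with total turn 2*PI *)
  (exists th : nat -> R,
      (forall i, th i < th (S i)) /\
      (forall i, th (i + N)%nat = th i + 2 * PI) /\
      (forall i, P i = (a * cos (th i), b * sin (th i)))) /\
  (* reflection law: the normal line at P i bisects angle P(i-1) P i P(i+1) *)
  (forall i, cross (vadd (unitv (vsub (P i) (P (S i))))
                         (unitv (vsub (P (S (S i))) (P (S i)))))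
                   (ell_normal a b (P (S i))) = 0) /\
  (exists al be : R, al > be /\ be > 0 /\ al ^ 2 - be ^ 2 = a ^ 2 - b ^ 2 /\
      forall i, line_tangent_to_ellipse al be (P i) (P (S i))).

From Stdlib Require Import Reals Lra Lia.
Open Scope R_scope.

(* The proof rests on central symmetry.  Write the vertices as points of
   eccentric angle th i on E.  Each side is tangent to a confocal caustic,
   which lies strictly inside E; each side is a support line of the caustic,
   so no tangent chord can be nested inside the arc of another, and two chains
   of tangent chords can never overtake each other.  Applying this to the
   vertex chain and to its reflection through the centre shifted by M = N/2
   steps gives th (i + M) = th i + PI, i.e. P (i + M) = - P i, and hence
   P' (i + M) = - P' i for the outer polygon (tangent lines meet only once).
   Finally the central reflection exchanges the foci and commutes with
   inversion, so the second inverted polygon is the reflection of a cyclic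
   relabelling of the first, and both operations preserve signed area. *)

Definition negp (p : pt) : pt := (- px p, - py p).

Lemma negp_involutive (p : pt) : negp (negp p) = p.
Proof. destruct p as [x y]; unfold negp, px, py; cbn [fst snd]; f_equal; ring. Qed.

Lemma foc2_negp (a b : R) : foc2 a b = negp (foc1 a b).
Proof. unfold foc1, foc2, negp, px, py; cbn [fst snd]; f_equal; ring. Qed.

Lemma invert_negp (f X : pt) : invert (negp f) (negp X) = negp (invert f X).
Proof.
  assert (Hn : norm2 (vsub (negp X) (negp f)) = norm2 (vsub X f)).
  { unfold norm2, dot, vsub, negp, px, py; cbn [fst snd]; ring. }
  unfold invert; rewrite Hn.
  unfold vadd, vscale, vsub, negp, px, py; cbn [fst snd]; f_equal; ring.
Qed.

Lemma sum_f_R0_shift1 (g : nat -> R) (n : nat) :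
  sum_f_R0 (fun i => g (S i)) n = sum_f_R0 g n - g 0%nat + g (S n).
Proof.
  induction n as [|n IH]; [simpl; ring|].
  simpl sum_f_R0 at 1; rewrite IH; simpl; ring.
Qed.

Lemma sum_f_R0_periodic_shift (f : nat -> R) (N M : nat) :
  (1 <= N)%nat -> (forall i, f (i + N)%nat = f i) ->
  sum_f_R0 (fun i => f (i + M)%nat) (pred N) = sum_f_R0 f (pred N).
Proof.
  intros HN Hper; induction M as [|M IH].
  - apply sum_eq; intros i _; f_equal; lia.
  - rewrite <- IH.
    transitivity (sum_f_R0 (fun i => f (S i + M)%nat) (pred N));
      [apply sum_eq; intros i _; f_equal; lia|].
    rewrite (sum_f_R0_shift1 (fun j => f (j + M)%nat)).
    replace (S (pred N) + M)%nat with (M + N)%nat by lia.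
    rewrite Hper; simpl; ring.
Qed.

Lemma signed_area_shift (N M : nat) (W : nat -> pt) :
  (1 <= N)%nat -> (forall i, W (i + N)%nat = W i) ->
  signed_area N (fun i => W (i + M)%nat) = signed_area N W.
Proof.
  intros HN Hper; unfold signed_area; f_equal.
  set (term := fun i => px (W i) * py (W (S i)) - px (W (S i)) * py (W i)).
  transitivity (sum_f_R0 (fun i => term (i + M)%nat) (pred N)).
  - apply sum_eq; intros i _; unfold term.
    replace (S i + M)%nat with (S (i + M)) by lia; reflexivity.
  - apply sum_f_R0_periodic_shift; [exact HN|].
    intro i; unfold term.
    replace (S (i + N)) with (S i + N)%nat by lia; rewrite !Hper; reflexivity.
Qed.

Lemma signed_area_negp (N : nat) (W : nat -> pt) :
  signed_area N (fun i => negp (W i)) = signed_area N W.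
Proof.
  unfold signed_area; f_equal; apply sum_eq; intros i _.
  unfold negp, px, py; cbn [fst snd]; ring.
Qed.

Lemma inversion_areas_symmetric (N M : nat) (f : pt) (Q : nat -> pt) :
  N = (M + M)%nat -> (1 <= N)%nat -> (forall i, Q (i + M)%nat = negp (Q i)) ->
  signed_area N (fun i => invert f (Q i)) =
  signed_area N (fun i => invert (negp f) (Q i)).
Proof.
  intros HNM HN Hsym.
  assert (Hper : forall i, Q (i + N)%nat = Q i).
  { intro i; replace (i + N)%nat with (i + M + M)%nat by lia.
    rewrite !Hsym; apply negp_involutive. }
  assert (Hpt : forall i, invert (negp f) (Q i) = negp (invert f (Q (i + M)%nat))).
  { intro i; rewrite <- invert_negp, Hsym, negp_involutive; reflexivity. }
  transitivity (signed_area N (fun i => negp (invert f (Q (i + M)%nat)))).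
  - rewrite signed_area_negp, (signed_area_shift N M (fun i => invert f (Q i))); auto.
    intro i; rewrite Hper; reflexivity.
  - unfold signed_area; f_equal; apply sum_eq; intros i _; rewrite !Hpt.
    replace (S i + M)%nat with (S (i + M)) by lia; reflexivity.
Qed.

(* Cauchy-Schwarz: on the ellipse (al,be) the linear form X |-> cross X d
   is bounded in absolute value by sqrt (al^2 dy^2 + be^2 dx^2). *)
Lemma cross_bound_on_ellipse (al be : R) (d X : pt) :
  al > 0 -> be > 0 -> on_ellipse al be X ->
  cross X d ^ 2 <= al ^ 2 * py d ^ 2 + be ^ 2 * px d ^ 2.
Proof.
  intros Hal Hbe HX; destruct X as [x y], d as [u v].
  unfold on_ellipse, cross, px, py in *; cbn [fst snd] in *.
  assert (Hid : al ^ 2 * v ^ 2 + be ^ 2 * u ^ 2 =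
                (x * v - y * u) ^ 2 + (al * v * y / be + be * u * x / al) ^ 2).
  { rewrite <- (Rmult_1_r (al ^ 2 * v ^ 2 + be ^ 2 * u ^ 2)), <- HX.
    field; lra. }
  pose proof (pow2_ge_0 (al * v * y / be + be * u * x / al)); lra.
Qed.

(* Along a tangent line the bound is attained: if the line through p and q,
   i.e. {X | cross X d = cross p d} with d = q - p, is tangent to the ellipse
   (al,be), then cross p d is the support value in the direction of d. *)
Lemma tangent_line_support (al be : R) (p q : pt) :
  al > 0 -> be > 0 -> line_tangent_to_ellipse al be p q ->
  cross p (vsub q p) ^ 2 =
  al ^ 2 * py (vsub q p) ^ 2 + be ^ 2 * px (vsub q p) ^ 2.
Proof.
  intros Hal Hbe [T [HT [Hcol Hnorm]]].
  destruct p as [p1 p2], q as [q1 q2], T as [x y].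
  unfold on_ellipse, cross, dot, vsub, ell_normal, px, py in *; cbn [fst snd] in *.
  set (u := q1 - p1) in *; set (v := q2 - p2) in *.
  assert (Hid : al ^ 2 * v ^ 2 + be ^ 2 * u ^ 2 =
                (x * v - y * u) ^ 2 + (al * be * (u * (x / al ^ 2) + v * (y / be ^ 2))) ^ 2).
  { rewrite <- (Rmult_1_r (al ^ 2 * v ^ 2 + be ^ 2 * u ^ 2)), <- HT.
    field; lra. }
  rewrite Hnorm in Hid; rewrite Hid; replace (x * v - y * u) with (p1 * v - p2 * u) by lra; ring.
Qed.

Lemma tangent_chord_not_diameter (al be : R) (p : pt) :
  al > 0 -> be > 0 -> line_tangent_to_ellipse al be p (negp p) -> p = (0, 0).
Proof.
  intros Hal Hbe Ht; pose proof (tangent_line_support al be _ _ Hal Hbe Ht) as Hs.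
  destruct p as [x y]; unfold cross, vsub, negp, px, py in Hs; cbn [fst snd] in Hs.
  assert (Hz : (al * y) ^ 2 + (be * x) ^ 2 = 0) by nra.
  assert (al * y = 0) by nra; assert (be * x = 0) by nra.
  f_equal; nra.
Qed.

Lemma tangent_swap (al be : R) (p q : pt) :
  line_tangent_to_ellipse al be p q -> line_tangent_to_ellipse al be q p.
Proof.
  intros [T [HT [Hcol Hnorm]]]; exists T; split; [exact HT|].
  split; [rewrite <- (Rmult_0_l (-1)), <- Hcol | rewrite <- (Rmult_0_l (-1)), <- Hnorm];
    unfold cross, dot, vsub, px, py; cbn [fst snd]; ring.
Qed.

Lemma tangent_negp (al be : R) (p q : pt) :
  line_tangent_to_ellipse al be p q -> line_tangent_to_ellipse al be (negp p) (negp q).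
Proof.
  intros [T [HT [Hcol Hnorm]]]; exists (negp T).
  unfold on_ellipse, cross, dot, vsub, ell_normal, negp, px, py in *; cbn [fst snd] in *.
  split; [|split]; [rewrite <- HT | rewrite <- Hcol | rewrite <- Hnorm]; unfold Rdiv; ring.
Qed.

Definition ell_pt (a b t : R) : pt := (a * cos t, b * sin t).

Definition ell_form (a b : R) (X : pt) : R := px X ^ 2 / a ^ 2 + py X ^ 2 / b ^ 2.

Lemma ell_pt_on_ellipse (a b t : R) : a > 0 -> b > 0 -> on_ellipse a b (ell_pt a b t).
Proof.
  intros Ha Hb; unfold on_ellipse, ell_pt, px, py; cbn [fst snd].
  rewrite <- (sin2_cos2 t); unfold Rsqr; field; lra.
Qed.

Lemma ell_pt_add_2PI (a b t : R) : ell_pt a b (t + 2 * PI) = ell_pt a b t.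
Proof. unfold ell_pt; rewrite cos_plus, sin_plus, cos_2PI, sin_2PI; f_equal; ring. Qed.

Lemma ell_pt_add_PI (a b t : R) : ell_pt a b (t + PI) = negp (ell_pt a b t).
Proof. unfold ell_pt, negp, px, py; cbn [fst snd]; rewrite neg_cos, neg_sin; f_equal; ring. Qed.

Lemma ell_pt_sub_PI (a b t : R) : ell_pt a b (t - PI) = negp (ell_pt a b t).
Proof.
  unfold ell_pt, negp, px, py; cbn [fst snd].
  rewrite cos_minus, sin_minus, cos_PI, sin_PI; f_equal; ring.
Qed.

Lemma ell_pt_chord_cross (a b t0 t1 : R) :
  cross (ell_pt a b t0) (vsub (ell_pt a b t1) (ell_pt a b t0)) = a * b * sin (t1 - t0).
Proof. unfold cross, vsub, ell_pt, px, py; cbn [fst snd]; rewrite sin_minus; ring. Qed.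

Lemma ell_pt_chord_height (a b t0 t1 s : R) :
  let d := vsub (ell_pt a b t1) (ell_pt a b t0) in
  cross (ell_pt a b s) d - cross (ell_pt a b t0) d =
  a * b * (sin (t1 - s) + sin (s - t0) - sin (t1 - t0)).
Proof. unfold cross, vsub, ell_pt, px, py; cbn [fst snd]; rewrite !sin_minus; ring. Qed.

Lemma cos_lt_1 (x : R) : 0 < x -> x < 2 * PI -> cos x < 1.
Proof.
  intros H0 H1; replace x with (2 * (x / 2)) by field.
  rewrite cos_2a_sin; assert (0 < sin (x / 2)) by (apply sin_gt_0; lra); nra.
Qed.

(* Subadditivity of sin on [0, PI]: the arc points lie on the far side of the chord. *)
Lemma sin_subadditive (x y : R) :
  0 <= x -> 0 <= y -> x + y < PI -> sin (x + y) <= sin x + sin y.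
Proof.
  intros Hx Hy Hxy; rewrite sin_plus.
  assert (0 <= sin x) by (apply sin_ge_0; lra); assert (0 <= sin y) by (apply sin_ge_0; lra).
  pose proof (COS_bound x); pose proof (COS_bound y); nra.
Qed.

Lemma sin_strict_subadditive (x y : R) :
  0 < x -> 0 < y -> x + y < PI -> sin (x + y) < sin x + sin y.
Proof.
  intros Hx Hy Hxy; rewrite sin_plus.
  assert (0 < sin x) by (apply sin_gt_0; lra); assert (0 < sin y) by (apply sin_gt_0; lra).
  assert (cos x < 1) by (apply cos_lt_1; lra); assert (cos y < 1) by (apply cos_lt_1; lra).
  nra.
Qed.

(* A caustic confocal to E and tangent to a nondegenerate chord of E is
   strictly inside E: writing lam = b^2 - be^2, tangency gives
   lam * K = (a b (1 - cos (t1 - t0)))^2 with K >= 0. *)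
Lemma confocal_caustic_inside (a b al be t0 t1 : R) :
  a > 0 -> b > 0 -> al > 0 -> be > 0 -> al ^ 2 - be ^ 2 = a ^ 2 - b ^ 2 ->
  0 < t1 - t0 < 2 * PI ->
  line_tangent_to_ellipse al be (ell_pt a b t0) (ell_pt a b t1) -> be ^ 2 < b ^ 2.
Proof.
  intros Ha Hb Hal Hbe Hconf Ht Htan.
  pose proof (tangent_line_support al be _ _ Hal Hbe Htan) as Hs.
  rewrite ell_pt_chord_cross in Hs; unfold ell_pt, vsub, px, py in Hs; cbn [fst snd] in Hs.
  assert (Hc : cos (t1 - t0) < 1) by (apply cos_lt_1; lra).
  rewrite sin_minus in Hs; rewrite cos_minus in Hc.
  pose proof (sin2_cos2 t0) as U0; pose proof (sin2_cos2 t1) as U1; unfold Rsqr in U0, U1.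
  set (lam := b ^ 2 - be ^ 2).
  replace (al ^ 2) with (a ^ 2 - lam) in Hs by (unfold lam; lra).
  replace (be ^ 2) with (b ^ 2 - lam) in Hs by (unfold lam; lra).
  set (K := b ^ 2 * (sin t1 - sin t0) ^ 2 + a ^ 2 * (cos t1 - cos t0) ^ 2).
  assert (HK : 0 <= K) by (unfold K; pose proof (pow2_ge_0 (sin t1 - sin t0));
                           pose proof (pow2_ge_0 (cos t1 - cos t0)); nra).
  assert (Hkey : lam * K = (a * b * (1 - (cos t1 * cos t0 + sin t1 * sin t0))) ^ 2).
  { assert (Hunit : a ^ 2 * b ^ 2 * (sin t0 * sin t0 + cos t0 * cos t0 - 1)
                  * (sin t1 * sin t1 + cos t1 * cos t1 - 1) = 0) by (rewrite U0; ring).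
    unfold K; lra. }
  assert (0 < (a * b * (1 - (cos t1 * cos t0 + sin t1 * sin t0))) ^ 2).
  { apply pow_lt; apply Rmult_lt_0_compat; [apply Rmult_lt_0_compat|]; lra. }
  destruct (Rle_or_lt lam 0) as [Hl|Hl]; [nra | unfold lam in Hl; lra].
Qed.

Lemma collinear_affine (p q T : pt) :
  q <> p -> cross (vsub q p) (vsub T p) = 0 ->
  exists t, T = vadd p (vscale t (vsub q p)).
Proof.
  intros Hne Hcol; destruct p as [p1 p2], q as [q1 q2], T as [x y].
  unfold cross, vsub, vadd, vscale, px, py in *; cbn [fst snd] in *.
  set (u := q1 - p1) in *; set (v := q2 - p2) in *.
  assert (Hn : 0 < u * u + v * v).
  { destruct (Req_dec u 0) as [Hu|Hu]; [destruct (Req_dec v 0) as [Hv|Hv]|]; try nra.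
    exfalso; apply Hne; f_equal; unfold u, v in *; lra. }
  set (n := u * u + v * v) in *; set (s := (x - p1) * u + (y - p2) * v).
  assert (Ex : (x - p1) * n - s * u = - v * (u * (y - p2) - v * (x - p1)))
    by (unfold n, s; ring).
  assert (Ey : (y - p2) * n - s * v = u * (u * (y - p2) - v * (x - p1)))
    by (unfold n, s; ring).
  rewrite Hcol in Ex, Ey.
  exists (s / n); f_equal; apply (Rmult_eq_reg_r n); try lra;
    [replace ((p1 + s / n * u) * n) with (p1 * n + s * u) by (field; lra)
    |replace ((p2 + s / n * v) * n) with (p2 * n + s * v) by (field; lra)]; lra.
Qed.

Lemma sq_div_nonneg (x c : R) : 0 < c -> 0 <= x ^ 2 / c.
Proof.
  intro Hc; apply Rmult_le_pos; [apply pow2_ge_0|left; apply Rinv_0_lt_compat; exact Hc].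
Qed.

(* Points of a chord of E that lie strictly inside E are interior to the chord:
   along the chord, ell_form (p + t (q - p)) = 1 - t (1 - t) ell_form (q - p). *)
Lemma chord_inside_interior (a b t : R) (p q : pt) :
  a > 0 -> b > 0 -> on_ellipse a b p -> on_ellipse a b q -> q <> p ->
  ell_form a b (vadd p (vscale t (vsub q p))) < 1 -> 0 < t < 1.
Proof.
  intros Ha Hb Hp Hq Hne Hin; destruct p as [p1 p2], q as [q1 q2].
  unfold on_ellipse, ell_form, vadd, vscale, vsub, px, py in *; cbn [fst snd] in *.
  set (u := q1 - p1) in *; set (v := q2 - p2) in *.
  assert (Hd : 0 < u ^ 2 / a ^ 2 + v ^ 2 / b ^ 2).
  { assert (0 < a ^ 2) by (apply pow_lt; lra); assert (0 < b ^ 2) by (apply pow_lt; lra).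
    destruct (Req_dec u 0) as [Hu|Hu]; [destruct (Req_dec v 0) as [Hv|Hv]|].
    - exfalso; apply Hne; f_equal; unfold u, v in *; lra.
    - assert (0 < v ^ 2) by (rewrite <- Rsqr_pow2; apply Rsqr_pos_lt; exact Hv).
      assert (0 <= u ^ 2 / a ^ 2) by (apply sq_div_nonneg; lra).
      assert (0 < v ^ 2 / b ^ 2) by (apply Rdiv_lt_0_compat; lra); lra.
    - assert (0 < u ^ 2) by (rewrite <- Rsqr_pow2; apply Rsqr_pos_lt; exact Hu).
      assert (0 <= v ^ 2 / b ^ 2) by (apply sq_div_nonneg; lra).
      assert (0 < u ^ 2 / a ^ 2) by (apply Rdiv_lt_0_compat; lra); lra. }
  assert (Hid : (p1 + t * u) ^ 2 / a ^ 2 + (p2 + t * v) ^ 2 / b ^ 2 =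
                (1 - t) * (p1 ^ 2 / a ^ 2 + p2 ^ 2 / b ^ 2)
                + t * (q1 ^ 2 / a ^ 2 + q2 ^ 2 / b ^ 2)
                - t * (1 - t) * (u ^ 2 / a ^ 2 + v ^ 2 / b ^ 2))
    by (unfold u, v; field; lra).
  rewrite Hp, Hq in Hid.
  assert (0 < t * (1 - t)) by (apply (Rmult_lt_reg_r (u ^ 2 / a ^ 2 + v ^ 2 / b ^ 2)); lra).
  destruct (Rle_or_lt t 0); destruct (Rle_or_lt 1 t); split; nra.
Qed.

Lemma smaller_ellipse_inside (a b al be : R) (T : pt) :
  a > 0 -> b > 0 -> al > 0 -> be > 0 -> al ^ 2 < a ^ 2 -> be ^ 2 < b ^ 2 ->
  on_ellipse al be T -> ell_form a b T < 1.
Proof.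
  intros Ha Hb Hal Hbe Hla Hlb HT; unfold on_ellipse, ell_form in *.
  destruct T as [x y]; unfold px, py in *; cbn [fst snd] in *.
  assert (Ex : x ^ 2 / a ^ 2 = x ^ 2 / al ^ 2 * (al ^ 2 / a ^ 2)) by (field; lra).
  assert (Ey : y ^ 2 / b ^ 2 = y ^ 2 / be ^ 2 * (be ^ 2 / b ^ 2)) by (field; lra).
  assert (Hra : 0 < al ^ 2 / a ^ 2 < 1).
  { split; [apply Rdiv_lt_0_compat; apply pow_lt; lra|].
    apply (Rmult_lt_reg_r (a ^ 2)); [apply pow_lt; lra|]; field_simplify; lra. }
  assert (Hrb : 0 < be ^ 2 / b ^ 2 < 1).
  { split; [apply Rdiv_lt_0_compat; apply pow_lt; lra|].
    apply (Rmult_lt_reg_r (b ^ 2)); [apply pow_lt; lra|]; field_simplify; lra. }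
  assert (0 <= x ^ 2 / al ^ 2) by (apply sq_div_nonneg, pow_lt; lra).
  assert (0 <= y ^ 2 / be ^ 2) by (apply sq_div_nonneg, pow_lt; lra).
  rewrite Ex, Ey.
  destruct (Req_dec (x ^ 2 / al ^ 2) 0) as [Hx|Hx]; [rewrite Hx in *|]; nra.
Qed.

(* The arc of E from t0 to t1 (shorter than PI) lies on the far side of its
   chord from the centre, strictly so at interior points. *)
Lemma arc_above_chord (a b t0 t1 s : R) :
  a > 0 -> b > 0 -> t0 <= s <= t1 -> t1 - t0 < PI ->
  let d := vsub (ell_pt a b t1) (ell_pt a b t0) in
  cross (ell_pt a b t0) d <= cross (ell_pt a b s) d.
Proof.
  intros Ha Hb Hs Harc d.
  enough (0 <= cross (ell_pt a b s) d - cross (ell_pt a b t0) d) by lra.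
  unfold d; rewrite ell_pt_chord_height.
  apply Rmult_le_pos; [apply Rmult_le_pos; lra|].
  replace (t1 - t0) with ((t1 - s) + (s - t0)) by ring.
  pose proof (sin_subadditive (t1 - s) (s - t0)); lra.
Qed.

Lemma arc_strictly_above_chord (a b t0 t1 s : R) :
  a > 0 -> b > 0 -> t0 < s < t1 -> t1 - t0 < PI ->
  let d := vsub (ell_pt a b t1) (ell_pt a b t0) in
  cross (ell_pt a b t0) d < cross (ell_pt a b s) d.
Proof.
  intros Ha Hb Hs Harc d.
  enough (0 < cross (ell_pt a b s) d - cross (ell_pt a b t0) d) by lra.
  unfold d; rewrite ell_pt_chord_height.
  apply Rmult_lt_0_compat; [apply Rmult_lt_0_compat; lra|].
  replace (t1 - t0) with ((t1 - s) + (s - t0)) by ring.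
  pose proof (sin_strict_subadditive (t1 - s) (s - t0)); lra.
Qed.

Lemma ell_pt_distinct (a b s0 s1 : R) :
  a > 0 -> b > 0 -> 0 < s1 - s0 < PI -> ell_pt a b s1 <> ell_pt a b s0.
Proof.
  intros Ha Hb Hs Heq; assert (Hz := ell_pt_chord_cross a b s0 s1).
  rewrite Heq in Hz.
  assert (Hz0 : a * b * sin (s1 - s0) = 0)
    by (rewrite <- Hz; unfold cross, vsub, px, py; cbn [fst snd]; ring).
  assert (0 < sin (s1 - s0)) by (apply sin_gt_0; lra).
  assert (0 < a * b * sin (s1 - s0)) by (apply Rmult_lt_0_compat; [apply Rmult_lt_0_compat|]; lra).
  lra.
Qed.

(* The tangency point of
   the inner chord would lie strictly above the line of the outer chord,
   which is a support line of the caustic. *)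
Lemma no_nested_tangent_chords (a b al be t0 t1 s0 s1 : R) :
  a > 0 -> b > 0 -> al > 0 -> be > 0 -> al ^ 2 < a ^ 2 -> be ^ 2 < b ^ 2 ->
  t0 <= s0 -> s0 < s1 -> s1 <= t1 -> t1 - t0 < PI -> (t0 < s0 \/ s1 < t1) ->
  line_tangent_to_ellipse al be (ell_pt a b t0) (ell_pt a b t1) ->
  line_tangent_to_ellipse al be (ell_pt a b s0) (ell_pt a b s1) -> False.
Proof.
  intros Ha Hb Hal Hbe Hla Hlb H0 H01 H1 Harc Hstrict Hout Hin.
  set (d := vsub (ell_pt a b t1) (ell_pt a b t0)).
  set (w := cross (ell_pt a b t0) d).
  assert (Hw : 0 < w).
  { unfold w, d; rewrite ell_pt_chord_cross.
    apply Rmult_lt_0_compat; [apply Rmult_lt_0_compat; lra|apply sin_gt_0; lra]. }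
  assert (Hsupp : w ^ 2 = al ^ 2 * py d ^ 2 + be ^ 2 * px d ^ 2)
    by exact (tangent_line_support al be _ _ Hal Hbe Hout).
  destruct Hin as [T [HT [Hcol _]]].
  assert (Hne : ell_pt a b s1 <> ell_pt a b s0) by (apply ell_pt_distinct; auto; lra).
  destruct (collinear_affine _ _ _ Hne Hcol) as [t HTt].
  assert (Ht : 0 < t < 1).
  { apply (chord_inside_interior a b t (ell_pt a b s0) (ell_pt a b s1));
      try apply ell_pt_on_ellipse; auto.
    rewrite <- HTt; apply (smaller_ellipse_inside a b al be); auto. }
  assert (Hlin : cross T d - w =
                 (1 - t) * (cross (ell_pt a b s0) d - w) + t * (cross (ell_pt a b s1) d - w))
    by (rewrite HTt; unfold cross, vadd, vscale, vsub, px, py; cbn [fst snd]; ring).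
  assert (Habove : w < cross T d).
  { assert (Hs0 : w <= cross (ell_pt a b s0) d) by (apply arc_above_chord; auto; lra).
    assert (Hs1 : w <= cross (ell_pt a b s1) d) by (apply arc_above_chord; auto; lra).
    destruct Hstrict.
    - assert (w < cross (ell_pt a b s0) d) by (apply arc_strictly_above_chord; auto; lra).
      nra.
    - assert (w < cross (ell_pt a b s1) d) by (apply arc_strictly_above_chord; auto; lra).
      nra. }
  pose proof (cross_bound_on_ellipse al be d T Hal Hbe HT); nra.
Qed.

Definition tangent_chain (a b al be : R) (u : nat -> R) : Prop :=
  forall i, 0 < u (S i) - u i < PI /\
    line_tangent_to_ellipse al be (ell_pt a b (u i)) (ell_pt a b (u (S i))).

Lemma tangent_chains_ordered (a b al be : R) (u v : nat -> R) (j : nat) :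
  a > 0 -> b > 0 -> al > 0 -> be > 0 -> al ^ 2 < a ^ 2 -> be ^ 2 < b ^ 2 ->
  tangent_chain a b al be u -> tangent_chain a b al be v ->
  u j < v j -> forall k, u (j + k)%nat < v (j + k)%nat.
Proof.
  intros Ha Hb Hal Hbe Hla Hlb Hu Hv Hj k; induction k as [|k IH].
  - rewrite Nat.add_0_r; exact Hj.
  - rewrite Nat.add_succ_r.
    destruct (Hu (j + k)%nat) as [Harc Htu], (Hv (j + k)%nat) as [Harc' Htv].
    destruct (Rlt_or_le (u (S (j + k))) (v (S (j + k)))) as [Hlt|Hge]; [exact Hlt|].
    exfalso; apply (no_nested_tangent_chords a b al be (u (j + k)%nat) (u (S (j + k)))
                      (v (j + k)%nat) (v (S (j + k)))); auto; lra.
Qed.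

Lemma orthogonal_to_independent (w n m : pt) :
  cross n m <> 0 -> dot w n = 0 -> dot w m = 0 -> w = (0, 0).
Proof.
  intros Hnm Hn Hm; destruct w as [w1 w2], n as [n1 n2], m as [m1 m2].
  unfold cross, dot, px, py in *; cbn [fst snd] in *.
  assert (E1 : w1 * (n1 * m2 - n2 * m1) = 0).
  { replace (w1 * (n1 * m2 - n2 * m1))
      with (m2 * (w1 * n1 + w2 * n2) - n2 * (w1 * m1 + w2 * m2)) by ring.
    rewrite Hn, Hm; ring. }
  assert (E2 : w2 * (n1 * m2 - n2 * m1) = 0).
  { replace (w2 * (n1 * m2 - n2 * m1))
      with (n1 * (w1 * m1 + w2 * m2) - m1 * (w1 * n1 + w2 * n2)) by ring.
    rewrite Hn, Hm; ring. }
  apply Rmult_integral in E1, E2.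
  destruct E1 as [E1|E1]; [|contradiction]; destruct E2 as [E2|E2]; [|contradiction].
  rewrite E1, E2; reflexivity.
Qed.

Lemma tangent_lines_meet_once (a b : R) (p q X Y : pt) :
  cross (ell_normal a b p) (ell_normal a b q) <> 0 ->
  on_tangent_line a b p X -> on_tangent_line a b q X ->
  on_tangent_line a b p Y -> on_tangent_line a b q Y -> X = Y.
Proof.
  unfold on_tangent_line; intros Hnm HpX HqX HpY HqY.
  assert (Hw : vsub X Y = (0, 0)).
  { apply (orthogonal_to_independent _ _ _ Hnm).
    - rewrite <- (Rminus_diag_eq _ _ (eq_trans HpX (eq_sym HpY))).
      unfold dot, vsub, px, py; cbn [fst snd]; ring.
    - rewrite <- (Rminus_diag_eq _ _ (eq_trans HqX (eq_sym HqY))).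
      unfold dot, vsub, px, py; cbn [fst snd]; ring. }
  destruct X as [x1 x2], Y as [y1 y2]; unfold vsub, px, py in Hw; cbn [fst snd] in Hw.
  injection Hw as H1 H2; f_equal; lra.
Qed.

Lemma ell_pt_normals_cross (a b u v : R) :
  a > 0 -> b > 0 ->
  cross (ell_normal a b (ell_pt a b u)) (ell_normal a b (ell_pt a b v)) = sin (v - u) / (a * b).
Proof.
  intros Ha Hb; unfold cross, ell_normal, ell_pt, px, py; cbn [fst snd].
  rewrite sin_minus; field; lra.
Qed.

Lemma on_tangent_negp (a b : R) (p X : pt) :
  on_tangent_line a b p X -> on_tangent_line a b (negp p) (negp X).
Proof.
  unfold on_tangent_line, dot, vsub, negp, ell_normal, px, py; cbn [fst snd].
  intros H; rewrite <- H; unfold Rdiv; ring.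
Qed.

Section BilliardSymmetry.

Variables (a b al be : R) (N M : nat) (th : nat -> R).
Hypotheses (Ha : a > 0) (Hb : b > 0) (Hal : al > 0) (Hbe : be > 0)
  (Hconf : al ^ 2 - be ^ 2 = a ^ 2 - b ^ 2) (HN : (3 <= N)%nat)
  (Hinc : forall i, th i < th (S i))
  (Hper : forall i, th (i + N)%nat = th i + 2 * PI)
  (Htan : forall i, line_tangent_to_ellipse al be (ell_pt a b (th i)) (ell_pt a b (th (S i)))).

Lemma th_increasing (i j : nat) : (i < j)%nat -> th i < th j.
Proof.
  induction 1 as [|j Hij IH]; [apply Hinc|]; pose proof (Hinc j); lra.
Qed.

Lemma arc_lt_2PI (i : nat) : th (S i) - th i < 2 * PI.
Proof. pose proof (Hper i); pose proof (th_increasing (S i) (i + N) ltac:(lia)); lra. Qed.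

Lemma caustic_inside : be ^ 2 < b ^ 2 /\ al ^ 2 < a ^ 2.
Proof.
  assert (be ^ 2 < b ^ 2); [|lra].
  apply (confocal_caustic_inside a b al be (th 0%nat) (th 1%nat)); auto.
  pose proof (Hinc 0%nat); pose proof (arc_lt_2PI 0); lra.
Qed.

(* Each side subtends an arc shorter than PI: an arc equal to PI would make the
   side a diameter, and a longer arc would nest the next side inside the
   complementary arc. *)
Lemma arc_lt_PI (i : nat) : th (S i) - th i < PI.
Proof.
  destruct caustic_inside as [Hlb Hla].
  destruct (Rlt_or_le (th (S i) - th i) PI) as [Hlt|Hge]; [exact Hlt|exfalso].
  destruct (Req_dec (th (S i) - th i) PI) as [Heq|Hne].
  - assert (Hzero := tangent_chord_not_diameter al be (ell_pt a b (th i)) Hal Hbe).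
    rewrite <- ell_pt_add_PI, <- Heq, Rplus_minus in Hzero.
    specialize (Hzero (Htan i)).
    assert (Hon := ell_pt_on_ellipse a b (th i) Ha Hb).
    rewrite Hzero in Hon; unfold on_ellipse, px, py in Hon; cbn [fst snd] in Hon.
    replace (0 ^ 2 / a ^ 2 + 0 ^ 2 / b ^ 2) with 0 in Hon by (field; lra); lra.
  - pose proof (th_increasing (S (S i)) (i + N) ltac:(lia)).
    pose proof (Hinc (S i)); rewrite Hper in *.
    apply (no_nested_tangent_chords a b al be (th (S i)) (th i + 2 * PI)
             (th (S i)) (th (S (S i)))); auto; try lra.
    rewrite ell_pt_add_2PI; apply tangent_swap, Htan.
Qed.

Lemma vertex_chain : tangent_chain a b al be th.
Proof. intro i; pose proof (Hinc i); pose proof (arc_lt_PI i); split; [lra | apply Htan]. Qed.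

(* The vertices shifted by M steps and reflected through the centre again form a
   chain of tangent chords, since the caustic is centrally symmetric. *)
Lemma reflected_vertex_chain : tangent_chain a b al be (fun k => th (k + M)%nat - PI).
Proof.
  intro k; cbn beta; replace (S k + M)%nat with (S (k + M)) by lia.
  pose proof (Hinc (k + M)%nat); pose proof (arc_lt_PI (k + M)); split; [lra|].
  rewrite !ell_pt_sub_PI; apply tangent_negp, Htan.
Qed.

Hypothesis HNM : N = (M + M)%nat.

(* If the
   reflected chain started strictly before (or after) the original one, it would
   stay so for M more steps, but M steps later the two chains have swapped roles. *)
Lemma opposite_vertex (j : nat) : th (j + M)%nat = th j + PI.
Proof.
  destruct caustic_inside as [Hlb Hla].
  assert (Hback : th (j + M + M)%nat = th j + 2 * PI)
    by (replace (j + M + M)%nat with (j + N)%nat by lia; apply Hper).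
  destruct (Rtotal_order (th (j + M)%nat - PI) (th j)) as [Hlt|[Heq|Hgt]]; [exfalso| lra |exfalso].
  - pose proof (tangent_chains_ordered a b al be _ _ j Ha Hb Hal Hbe Hla Hlb
                  reflected_vertex_chain vertex_chain Hlt M); cbn beta in *; lra.
  - pose proof (tangent_chains_ordered a b al be _ _ j Ha Hb Hal Hbe Hla Hlb
                  vertex_chain reflected_vertex_chain Hgt M); cbn beta in *; lra.
Qed.

Lemma outer_vertex_opposite (Q : nat -> pt) :
  (forall i, on_tangent_line a b (ell_pt a b (th i)) (Q i) /\
             on_tangent_line a b (ell_pt a b (th (S i))) (Q i)) ->
  forall i, Q (i + M)%nat = negp (Q i).
Proof.
  intros HQ i; destruct (HQ (i + M)%nat) as [H1 H2], (HQ i) as [H3 H4].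
  apply (tangent_lines_meet_once a b (ell_pt a b (th (i + M)%nat)) (ell_pt a b (th (S (i + M)))));
    auto.
  - rewrite ell_pt_normals_cross by auto.
    pose proof (Hinc (i + M)%nat); pose proof (arc_lt_PI (i + M)).
    assert (0 < sin (th (S (i + M)) - th (i + M)%nat)) by (apply sin_gt_0; lra).
    assert (0 < a * b) by (apply Rmult_lt_0_compat; lra).
    apply Rgt_not_eq, Rdiv_lt_0_compat; assumption.
  - rewrite opposite_vertex, ell_pt_add_PI; apply on_tangent_negp, H3.
  - replace (S (i + M)) with (S i + M)%nat by lia.
    rewrite opposite_vertex, ell_pt_add_PI; apply on_tangent_negp, H4.
Qed.

End BilliardSymmetry.

Theorem mainTheorem5 (a b : R) (N : nat) (P Q : nat -> pt) :
  a > b -> b > 0 ->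
  (4 <= N)%nat -> Nat.Even N ->
  billiard_trajectory a b N P ->
  (forall i, on_tangent_line a b (P i) (Q i) /\ on_tangent_line a b (P (S i)) (Q i)) ->
  signed_area N (fun i => invert (foc1 a b) (Q i)) =
  signed_area N (fun i => invert (foc2 a b) (Q i)).
Proof.
  intros Hab Hb HN [M HM] Htraj HQ.
  destruct Htraj as [_ [_ [_ [[th [Hinc [Hper HP]]] [_ [al [be [Habe [Hbe [Hconf Htan]]]]]]]]]].
  assert (HPth : forall i, P i = ell_pt a b (th i)) by exact HP.
  rewrite foc2_negp; apply (inversion_areas_symmetric N M); [lia | lia |].
  apply (outer_vertex_opposite a b al be N M th); try lra; try lia; auto.
  - intro i; rewrite <- !HPth; apply Htan.
  - intro i; rewrite <- !HPth; apply HQ.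
Qed.
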